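(* Let $1,2,3,4$ be four distinct vertices of $G$ such that $G[\{1,2,3,4\}]$ has edge set exactly $\{12,23,34\}$. If $\Gamma_G$ is population monotonic, then $w_{23}\ge w_{12}+w_{34}$.
   Context: $G=(V,E;w)$ is a finite simple graph with edge weights $w:E\to\mathbb{R}$, $w_e>0$ for all $e\in E$; $w_{ij}$ denotes the weight of edge $ij$. The matching game on $G$ is the cooperative game $\Gamma_G=(N,\gamma)$ with player set $N=V$ and, for $S\subseteq N$, $\gamma(S)$ equal to the maximum weight of a matching in the induced subgraph $G[S]$ (so $\gamma(\emptyset)=0$). A population monotonic allocation scheme (PMAS) is a family $(\boldsymbol{x}_S)_{\emptyset\neq S\subseteq N}$ with $\boldsymbol{x}_S=(x_{S,i})_{i\in S}\in\mathbb{R}^S$ such that (efficiency) $\sum_{i\in S}x_{S,i}=\gamma(S)$ for every nonempty $S\subseteq N$, and (monotonicity) $x_{S,i}\le x_{T,i}$ whenever $\emptyset\ne S\subseteq T\subseteq N$ and $i\in S$. $\Gamma_G$ is called population monotonic if it admits a PMAS. *)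

From mathcomp Require Import all_boot all_order all_algebra.
Set Implicit Arguments. Unset Strict Implicit. Unset Printing Implicit Defensive.
Import Order.TTheory GRing.Theory Num.Theory.
Local Open Scope ring_scope.

(* A finite simple graph on vertex type V : finType is a symmetric irreflexive
   relation e; edge weights are w : V -> V -> R, symmetric and positive on edges
   (values off edges are irrelevant). *)
Definition simple_graph (V : finType) (e : rel V) : Prop :=
  (forall x, ~~ e x x) /\ (forall x y, e x y = e y x).

Definition edge_weights (R : realFieldType) (V : finType) (e : rel V)
  (w : V -> V -> R) : Prop :=
  (forall x y, w x y = w y x) /\ (forall x y, e x y -> 0 < w x y).

(* A matching in G[S], represented as a set of oriented edges (x,y); pairwise
   vertex-disjointness forces each edge to appear with one orientation only. *)
Definition is_matching (V : finType) (e : rel V) (S : {set V})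
  (M : {set V * V}) : bool :=
  [forall p in M, [&& p.1 \in S, p.2 \in S & e p.1 p.2]] &&
  [forall p in M, forall q in M,
     (p != q) ==> [disjoint [set p.1; p.2] & [set q.1; q.2]]].

Definition matching_weight (R : realFieldType) (V : finType)
  (w : V -> V -> R) (M : {set V * V}) : R :=
  \sum_(p in M) w p.1 p.2.

(* gamma(S) = maximum weight of a matching in G[S] (the empty matching has
   weight 0, so 0 is a correct neutral element). *)
Definition gamma (R : realFieldType) (V : finType) (e : rel V)
  (w : V -> V -> R) (S : {set V}) : R :=
  \big[Num.max/0]_(M : {set V * V} | is_matching e S M) matching_weight w M.

(* Population monotonic allocation scheme: x S i is x_{S,i}
   (only values with S nonempty and i in S are meaningful). *)
Definition is_PMAS (R : realFieldType) (V : finType) (e : rel V)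
  (w : V -> V -> R) (x : {set V} -> V -> R) : Prop :=
  (forall S : {set V}, S != set0 -> \sum_(i in S) x S i = gamma e w S) /\
  (forall (S T : {set V}) (i : V), S != set0 -> S \subset T -> i \in S ->
     x S i <= x T i).

Definition population_monotonic (R : realFieldType) (V : finType) (e : rel V)
  (w : V -> V -> R) : Prop :=
  exists x : {set V} -> V -> R, is_PMAS e w x.

From mathcomp Require Import all_boot all_order all_algebra.
From mathcomp Require Import lra.
Set Implicit Arguments. Unset Strict Implicit. Unset Printing Implicit Defensive.
Import Order.TTheory GRing.Theory Num.Theory.
Local Open Scope ring_scope.

(* Let x be a PMAS and a - b - c an induced path (a, c not
   adjacent).  By efficiency and monotonicity,
     x_{bc,c} + w_ab <= x_{abc,c} + (x_{ab,a} + x_{ab,b})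
                     <= x_{abc,a} + x_{abc,b} + x_{abc,c} = gamma({a,b,c}),
   and gamma({a,b,c}) = max(w_ab, w_bc) since a matching on three vertices
   has at most one edge.  Applied to the paths 1-2-3 and 4-3-2 this bounds
   both shares of the coalition {2,3}; as their sum is gamma({2,3}) >= w_23,
   a case analysis on the two maxima (all weights being positive) gives
   w_23 >= w_12 + w_34. *)

Lemma big_set2 (T : finType) (M : nmodType) (f : T -> M) (a b : T) :
  a != b -> \sum_(i in [set a; b]) f i = f a + f b.
Proof. by move=> nab; rewrite big_setU1 ?big_set1 ?in_set1. Qed.

Lemma big_set3 (T : finType) (M : nmodType) (f : T -> M) (a b c : T) :
  uniq [:: a; b; c] -> \sum_(i in [set a; b; c]) f i = f a + f b + f c.
Proof.
rewrite /= !inE negb_or => /and3P[/andP[nab nac] nbc _].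
rewrite -setUA big_setU1 /= ?big_set2 //; first by rewrite addrA.
by rewrite !inE negb_or nab nac.
Qed.

Section Gamma.
Variables (R : realFieldType) (V : finType) (e : rel V) (w : V -> V -> R).

Lemma matching_weight_le_gamma S M :
  is_matching e S M -> matching_weight w M <= gamma e w S.
Proof. by move=> HM; apply: (le_bigmax_cond _ _ HM). Qed.

Lemma edge_weight_le_gamma (S : {set V}) a b :
  a \in S -> b \in S -> e a b -> w a b <= gamma e w S.
Proof.
move=> aS bS eab.
have -> : w a b = matching_weight w [set (a, b)] by rewrite /matching_weight big_set1.
apply: matching_weight_le_gamma; apply/andP; split; apply/forall_inP => p.
  by rewrite in_set1 => /eqP ->; rewrite aS bS eab.
by rewrite in_set1 => /eqP ->; apply/forall_inP => q; rewrite in_set1 => /eqP ->; rewrite eqxx.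
Qed.

(* In a loopless graph, two distinct edges of a matching cover four distinct
   vertices, so a matching on at most three vertices has at most one edge. *)
Lemma small_matching_single (S : {set V}) M p q :
  (forall x, ~~ e x x) -> (#|S| <= 3)%N -> is_matching e S M ->
  p \in M -> q \in M -> p = q.
Proof.
move=> irr cardS /andP[/forall_inP inS /forall_inP disj] pM qM.
apply/eqP/negPn/negP => npq.
have dis := forall_inP (disj p pM) q qM; rewrite npq /= in dis.
have /and3P[p1 p2 edge_p] := inS p pM; have /and3P[q1 q2 edge_q] := inS q qM.
have np : p.1 != p.2 by apply: contraNneq (irr p.1) => h; rewrite {2}h edge_p.
have nq : q.1 != q.2 by apply: contraNneq (irr q.1) => h; rewrite {2}h edge_q.
have sub : [set p.1; p.2] :|: [set q.1; q.2] \subset S.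
  by apply/subsetP => z; rewrite !inE => /orP[/orP[]|/orP[]] /eqP ->.
have := leq_trans (subset_leq_card sub) cardS.
by rewrite cardsU (disjoint_setI0 dis) cards0 subn0 !cards2 np nq.
Qed.

Lemma gamma_path3 a b c :
  simple_graph e -> (forall x y, w x y = w y x) ->
  uniq [:: a; b; c] -> ~~ e a c -> 0 <= w a b ->
  gamma e w [set a; b; c] <= Num.max (w a b) (w b c).
Proof.
move=> [irr sym] wsym uabc nac wab.
have card3 : (#|[set a; b; c]| <= 3)%N.
  apply: leq_trans (leq_card_setU _ _) _; rewrite cards1 addn1 ltnS.
  by apply: leq_trans (leq_card_setU _ _) _; rewrite !cards1.
apply/bigmax_leP; split => [|M HM]; first by rewrite le_max wab.
have [->|[p pM]] := set_0Vmem M.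
  by rewrite /matching_weight big_set0 le_max wab.
have -> : M = [set p].
  apply/setP => q; rewrite in_set1; apply/idP/eqP => [qM|->//].
  exact: small_matching_single irr card3 HM qM pM.
rewrite /matching_weight big_set1.
have /andP[/forall_inP/(_ p pM)/and3P[] + + exy _] := HM; rewrite !inE.
move: uabc exy; rewrite /= !inE negb_or => /and3P[/andP[nab _] nbc _].
case: p {pM} => x y /= exy /orP[/orP[]|] /eqP ? /orP[/orP[]|] /eqP ?; subst x y;
  rewrite ?(wsym b a) ?(wsym c b) ?le_max ?lexx ?orbT //.
all: by move: exy; rewrite ?(sym c a) ?(negbTE nac) ?(negbTE (irr _)).
Qed.

End Gamma.

Section PMAS.
Variables (R : realFieldType) (V : finType) (e : rel V) (w : V -> V -> R).
Variable x : {set V} -> V -> R.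
Hypothesis pmas : is_PMAS e w x.

Lemma pmas_mono {S T : {set V}} {i} : i \in S -> S \subset T -> x S i <= x T i.
Proof.
by move=> iS ST; apply: pmas.2 => //; apply/set0Pn; exists i.
Qed.

Lemma pmas_efficient {S : {set V}} {i} : i \in S -> \sum_(j in S) x S j = gamma e w S.
Proof. by move=> iS; apply: pmas.1; apply/set0Pn; exists i. Qed.

Lemma pmas_path_share a b c : uniq [:: a; b; c] -> e a b ->
  x [set b; c] c + w a b <= gamma e w [set a; b; c].
Proof.
move=> uabc eab; have := uabc; rewrite /= !inE negb_or => /and3P[/andP[nab _] _ _].
have inab : [set a; b] \subset [set a; b; c].
  by apply/subsetP => z; rewrite !inE => /orP[] ->; rewrite ?orbT.
have inbc : [set b; c] \subset [set a; b; c].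
  by apply/subsetP => z; rewrite !inE => /orP[] ->; rewrite ?orbT.
have eff_abc : \sum_(i in [set a; b; c]) x [set a; b; c] i = gamma e w [set a; b; c].
  by apply: (pmas_efficient (i := a)); rewrite !inE eqxx.
rewrite big_set3 // in eff_abc.
have eff_ab : \sum_(i in [set a; b]) x [set a; b] i = gamma e w [set a; b].
  exact: (pmas_efficient (set21 a b)).
rewrite big_set2 // in eff_ab.
have w_ab : w a b <= gamma e w [set a; b] by apply: edge_weight_le_gamma; rewrite ?inE ?eqxx ?orbT.
have mono_a := pmas_mono (set21 a b) inab.
have mono_b := pmas_mono (set22 a b) inab.
have mono_c := pmas_mono (set22 b c) inbc.
lra.
Qed.

End PMAS.

Lemma shares_ineq (R : realDomainType) (a b c s t : R) :
  0 < a -> 0 < b -> 0 < c ->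
  s + a <= Num.max a b -> t + c <= Num.max c b -> b <= s + t -> a + c <= b.
Proof.
move=> a_gt0 b_gt0 c_gt0.
have [ab|ba] := leP a b; have [cb|bc] := leP c b; lra.
Qed.

Theorem mainTheorem5 (R : realFieldType) (V : finType) (e : rel V)
  (w : V -> V -> R) (v1 v2 v3 v4 : V) :
  simple_graph e -> edge_weights e w ->
  uniq [:: v1; v2; v3; v4] ->
  e v1 v2 -> e v2 v3 -> e v3 v4 ->
  ~~ e v1 v3 -> ~~ e v1 v4 -> ~~ e v2 v4 ->
  population_monotonic e w ->
  w v1 v2 + w v3 v4 <= w v2 v3.
Proof.
move=> graph [wsym wpos] u e12 e23 e34 n13 _ n24 [x pmas].
move: u; rewrite /= !inE !negb_or => /and4P[/and3P[d12 d13 _] /andP[d23 d24] d34 _].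
have u123 : uniq [:: v1; v2; v3] by rewrite /= !inE negb_or d12 d13 d23.
have u432 : uniq [:: v4; v3; v2] by rewrite /= !inE negb_or eq_sym d34 eq_sym d24 eq_sym d23.
have e43 : e v4 v3 by rewrite graph.2.
have n42 : ~~ e v4 v2 by rewrite graph.2.
have share3 := le_trans (pmas_path_share pmas u123 e12)
                        (gamma_path3 graph wsym u123 n13 (ltW (wpos _ _ e12))).
have share2 := le_trans (pmas_path_share pmas u432 e43)
                        (gamma_path3 graph wsym u432 n42 (ltW (wpos _ _ e43))).
rewrite setUC (wsym v4 v3) (wsym v3 v2) in share2.
have worth23 : w v2 v3 <= x [set v2; v3] v3 + x [set v2; v3] v2.
  rewrite addrC -big_set2 // (pmas_efficient pmas (set21 v2 v3)).
  by apply: edge_weight_le_gamma; rewrite ?set21 ?set22.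
exact: shares_ineq (wpos _ _ e12) (wpos _ _ e23) (wpos _ _ e34) share3 share2 worth23.
Qed.
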